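(* Let $L>0$ and let $\alpha,\beta:\mathbb{R}\to\mathbb{R}^2$ be smooth $L$-periodic maps (initial data) with $\alpha'$ nowhere zero, $\langle\beta,\alpha'\rangle = 0$ and $|\alpha'|^2+|\beta|^2=1$, and such that $\alpha$ has zero rotation index. Let $\gamma(t,s) = \tfrac12(\alpha(s+t)+\alpha(s-t)) + \tfrac12\int_{s-t}^{s+t}\beta(\xi)\,d\xi$. Then there exists a time $T$ such that the unit tangent map $U(T,\cdot)$ of the curve $s\mapsto\gamma(T,s)$ is discontinuous, i.e. $s\mapsto \gamma_{,s}(T,s)/|\gamma_{,s}(T,s)|$ (defined where $\gamma_{,s}(T,s)\neq0$) does not extend to a continuous map on $\mathbb{R}$.
   Context: The rotation index of $\alpha$ is the degree of $\alpha'/|\alpha'|$ as a map from $\mathbb{R}/L\mathbb{Z}$ to the unit circle. *)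

From Stdlib Require Import Reals.
From Coquelicot Require Import Coquelicot.
Open Scope R_scope.

(* A map R -> R^2 is represented by its two component functions. *)

Definition smooth (f : R -> R) : Prop :=
  forall (n : nat) (x : R), ex_derive_n f n x.

Definition periodic (L : R) (f : R -> R) : Prop :=
  forall s, f (s + L) = f s.

Definition angle_lift (a1 a2 theta : R -> R) : Prop :=
  (forall s, continuous theta s) /\
  forall s,
    Derive a1 s = sqrt (Derive a1 s ^ 2 + Derive a2 s ^ 2) * cos (theta s) /\
    Derive a2 s = sqrt (Derive a1 s ^ 2 + Derive a2 s ^ 2) * sin (theta s).

(* Rotation index of the L-periodic curve alpha = (a1,a2): degree of
   alpha'/|alpha'| as a map R/LZ -> S^1, computed through a continuous lift. *)
Definition has_rotation_index (L : R) (a1 a2 : R -> R) (k : Z) : Prop :=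
  exists theta, angle_lift a1 a2 theta /\ theta L - theta 0 = 2 * PI * IZR k.

Definition gamma_comp (a b : R -> R) (t s : R) : R :=
  / 2 * (a (s + t) + a (s - t)) + / 2 * RInt b (s - t) (s + t).

(* Write [alpha' + beta = e^{i theta_plus}] and [alpha' - beta = e^{i theta_minus}]; the tangent
   angle of [alpha] is their mean and [|theta_plus - theta_minus| < PI].  By d'Alembert,
   [gamma_s(T, s) = (e^{i theta_plus (s + T)} + e^{i theta_minus (s - T)}) / 2], which vanishes
   when [theta_plus x - theta_minus y = PI] ([x = s + T], [y = s - T]) with [s]-derivative
   [(theta_plus' x - theta_minus' y) i e^{i theta_plus x} / 2]; at such a simple zero the unit
   tangent flips direction.  A closed curve of rotation index 0 has a periodic tangent angle
   oscillating by more than [PI] on a period, so [theta_plus x - theta_minus y] reaches [PI];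
   if every such opposition had equal rates, a whole band of values of [theta_plus] would be
   critical, which is impossible for a function crossing that band. *)

From Stdlib Require Import Reals Lra Lia Psatz Classical.
From Coquelicot Require Import Coquelicot.
Open Scope R_scope.

Definition continuous_direction (G1 G2 : R -> R) : Prop :=
  exists u1 u2 : R -> R,
    (forall s, continuous u1 s) /\ (forall s, continuous u2 s) /\
    forall s, (G1 s <> 0 \/ G2 s <> 0) ->
      u1 s = G1 s / sqrt (G1 s ^ 2 + G2 s ^ 2) /\
      u2 s = G2 s / sqrt (G1 s ^ 2 + G2 s ^ 2).

Lemma continuous_direction_ext (G1 G2 H1 H2 : R -> R) :
  (forall s, G1 s = H1 s) -> (forall s, G2 s = H2 s) ->
  continuous_direction G1 G2 -> continuous_direction H1 H2.
Proof.
  intros E1 E2 (u1 & u2 & c1 & c2 & Hu).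
  exists u1, u2; split; [exact c1 | split; [exact c2 |]].
  intros s; rewrite <- E1, <- E2; apply Hu.
Qed.

Lemma sum_sqr_pos (x y : R) : x <> 0 \/ y <> 0 -> 0 < x ^ 2 + y ^ 2.
Proof. intros [H|H]; pose proof (pow2_gt_0 _ H); pose proof (pow2_ge_0 x); pose proof (pow2_ge_0 y); lra. Qed.

(* Polynomial relations between the direction [U] of [(a, b)] and [w = (a, b) / h]: unlike
   [U = w / |w|] they also hold when [w = 0], and they pass to limits. *)
Lemma direction_alignment (a b h sg U1 U2 : R) : 0 < sg * h ->
  ((a <> 0 \/ b <> 0) -> U1 = a / sqrt (a ^ 2 + b ^ 2) /\ U2 = b / sqrt (a ^ 2 + b ^ 2)) ->
  U1 * (b / h) - U2 * (a / h) = 0 /\ 0 <= sg * (U1 * (a / h) + U2 * (b / h)) /\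
  (U1 ^ 2 + U2 ^ 2) * ((a / h) ^ 2 + (b / h) ^ 2) = (a / h) ^ 2 + (b / h) ^ 2.
Proof.
  intros Hsg HU.
  assert (Hh : h <> 0) by (intros ->; lra).
  destruct (classic (a <> 0 \/ b <> 0)) as [Hab | Hab].
  2: { assert (a = 0 /\ b = 0) as [-> ->] by tauto; unfold Rdiv; repeat split; ring_simplify; lra. }
  destruct (HU Hab) as [-> ->].
  pose proof (sum_sqr_pos _ _ Hab) as Hn.
  pose proof (sqrt_lt_R0 _ Hn) as Hq; pose proof (sqrt_sqrt _ (Rlt_le _ _ Hn)) as Hq2.
  set (q := sqrt (a ^ 2 + b ^ 2)) in *.
  repeat split.
  - field; lra.
  - replace (sg * (a / q * (a / h) + b / q * (b / h))) with (q * (sg * h) / (h * h))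
      by (field_simplify_eq; [nra | lra]).
    apply Rmult_le_pos; [nra | apply Rlt_le, Rinv_0_lt_compat; nra].
  - replace ((a / q) ^ 2 + (b / q) ^ 2) with 1; [ring |].
    field_simplify_eq; [nra | lra].
Qed.

Lemma is_lim_seq_difference_quotient (f : R -> R) (s0 v : R) (h : nat -> R) :
  is_derive f s0 v -> (forall n, h n <> 0) -> is_lim_seq h 0 ->
  is_lim_seq (fun n => (f (s0 + h n) - f s0) / h n) v.
Proof.
  intros Hd Hn Hh.
  apply is_derive_Reals in Hd.
  apply is_lim_seq_spec in Hh; apply is_lim_seq_spec.
  intros eps; destruct (Hd eps (cond_pos eps)) as [del Hdel].
  destruct (Hh del) as [N HN]; exists N; intros n Hnn.
  apply Hdel; [apply Hn |].
  rewrite <- (Rminus_0_r (h n)); apply HN, Hnn.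
Qed.

Lemma is_lim_seq_inv_succ : is_lim_seq (fun n => / INR (S n)) 0.
Proof.
  replace (Finite 0) with (Rbar_inv p_infty) by reflexivity.
  apply is_lim_seq_inv; [| discriminate].
  apply (is_lim_seq_incr_1 INR), is_lim_seq_INR.
Qed.
Lemma is_lim_seq_const_le (u : nat -> R) (l c : R) :
  is_lim_seq u l -> (forall n, c <= u n) -> c <= l.
Proof. intros Hu Hc; exact (is_lim_seq_le (fun _ => c) u c l Hc (is_lim_seq_const c) Hu). Qed.

Lemma is_lim_seq_le_const (u : nat -> R) (l c : R) :
  is_lim_seq u l -> (forall n, u n <= c) -> l <= c.
Proof. intros Hu Hc; exact (is_lim_seq_le u (fun _ => c) l c Hc Hu (is_lim_seq_const c)). Qed.

Lemma direction_limit_invariants (u1 u2 G1 G2 : R -> R) (s0 v1 v2 sg : R) (h : nat -> R) :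
  continuous u1 s0 -> continuous u2 s0 -> is_derive G1 s0 v1 -> is_derive G2 s0 v2 ->
  G1 s0 = 0 -> G2 s0 = 0 -> is_lim_seq h 0 -> (forall n, 0 < sg * h n) ->
  (forall s, (G1 s <> 0 \/ G2 s <> 0) ->
     u1 s = G1 s / sqrt (G1 s ^ 2 + G2 s ^ 2) /\ u2 s = G2 s / sqrt (G1 s ^ 2 + G2 s ^ 2)) ->
  u1 s0 * v2 - u2 s0 * v1 = 0 /\ 0 <= sg * (u1 s0 * v1 + u2 s0 * v2) /\
  (u1 s0 ^ 2 + u2 s0 ^ 2) * (v1 ^ 2 + v2 ^ 2) = v1 ^ 2 + v2 ^ 2.
Proof.
  intros c1 c2 d1 d2 z1 z2 Hh Hsg Hu.
  assert (Hh0 : forall n, h n <> 0) by (intros n Hn; specialize (Hsg n); rewrite Hn in Hsg; lra).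
  set (x n := s0 + h n).
  set (w1 n := G1 (x n) / h n); set (w2 n := G2 (x n) / h n).
  assert (W1 : is_lim_seq w1 v1).
  { apply (is_lim_seq_ext (fun n => (G1 (s0 + h n) - G1 s0) / h n)); [intro n; now rewrite z1, Rminus_0_r |].
    now apply is_lim_seq_difference_quotient. }
  assert (W2 : is_lim_seq w2 v2).
  { apply (is_lim_seq_ext (fun n => (G2 (s0 + h n) - G2 s0) / h n)); [intro n; now rewrite z2, Rminus_0_r |].
    now apply is_lim_seq_difference_quotient. }
  assert (X : is_lim_seq x s0).
  { replace (Finite s0) with (Rbar_plus s0 0) by (simpl; f_equal; ring).
    apply is_lim_seq_plus'; [apply is_lim_seq_const | exact Hh]. }
  assert (U1 : is_lim_seq (fun n => u1 (x n)) (u1 s0)) by (eapply filterlim_comp; [exact X | exact c1]).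
  assert (U2 : is_lim_seq (fun n => u2 (x n)) (u2 s0)) by (eapply filterlim_comp; [exact X | exact c2]).
  assert (Hn : forall n,
    u1 (x n) * w2 n - u2 (x n) * w1 n = 0 /\ 0 <= sg * (u1 (x n) * w1 n + u2 (x n) * w2 n) /\
    (u1 (x n) ^ 2 + u2 (x n) ^ 2) * (w1 n ^ 2 + w2 n ^ 2) = w1 n ^ 2 + w2 n ^ 2)
    by (intro n; apply direction_alignment; auto).
  assert (cross : is_lim_seq (fun n => u1 (x n) * w2 n - u2 (x n) * w1 n) (u1 s0 * v2 - u2 s0 * v1))
    by (apply is_lim_seq_minus'; apply is_lim_seq_mult'; assumption).
  assert (dot : is_lim_seq (fun n => sg * (u1 (x n) * w1 n + u2 (x n) * w2 n))
                           (sg * (u1 s0 * v1 + u2 s0 * v2))).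
  { apply is_lim_seq_mult'; [apply is_lim_seq_const |]; apply is_lim_seq_plus'; apply is_lim_seq_mult'; assumption. }
  assert (norm : is_lim_seq (fun n => (u1 (x n) ^ 2 + u2 (x n) ^ 2) * (w1 n ^ 2 + w2 n ^ 2) - (w1 n ^ 2 + w2 n ^ 2))
                            ((u1 s0 ^ 2 + u2 s0 ^ 2) * (v1 ^ 2 + v2 ^ 2) - (v1 ^ 2 + v2 ^ 2))).
  { simpl; repeat first [apply is_lim_seq_minus' | apply is_lim_seq_plus' | apply is_lim_seq_mult'
                         | apply is_lim_seq_const | assumption]. }
  repeat split.
  - apply Rle_antisym; [apply (is_lim_seq_le_const _ _ 0 cross) | apply (is_lim_seq_const_le _ _ 0 cross)];
      intro n; rewrite (proj1 (Hn n)); lra.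
  - apply (is_lim_seq_const_le _ _ 0 dot); intro n; apply Hn.
  - enough (E : (u1 s0 ^ 2 + u2 s0 ^ 2) * (v1 ^ 2 + v2 ^ 2) - (v1 ^ 2 + v2 ^ 2) = 0) by lra.
    apply Rle_antisym; [apply (is_lim_seq_le_const _ _ 0 norm) | apply (is_lim_seq_const_le _ _ 0 norm)];
      intro n; rewrite (proj2 (proj2 (Hn n))); lra.
Qed.

Lemma no_continuous_direction_at_simple_zero (G1 G2 : R -> R) (s0 v1 v2 : R) :
  is_derive G1 s0 v1 -> is_derive G2 s0 v2 -> G1 s0 = 0 -> G2 s0 = 0 -> (v1 <> 0 \/ v2 <> 0) ->
  ~ continuous_direction G1 G2.
Proof.
  intros d1 d2 z1 z2 Hv (u1 & u2 & c1 & c2 & Hu).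
  assert (Hpos : forall n, 0 < / INR (S n)) by (intro n; apply Rinv_0_lt_compat, lt_0_INR; lia).
  destruct (direction_limit_invariants u1 u2 G1 G2 s0 v1 v2 1 (fun n => / INR (S n)))
    as (cross & right & norm); auto using is_lim_seq_inv_succ.
  { intro n; specialize (Hpos n); lra. }
  destruct (direction_limit_invariants u1 u2 G1 G2 s0 v1 v2 (-1) (fun n => - / INR (S n)))
    as (_ & left & _); auto.
  { replace (Finite 0) with (Rbar_opp 0) by (simpl; f_equal; ring).
    apply -> is_lim_seq_opp; apply is_lim_seq_inv_succ. }
  { intro n; specialize (Hpos n); lra. }
  (* The one-sided limits put [u(s0)] on both sides of [G'(s0)], hence orthogonal to it,
     while it is also parallel to it and of norm 1. *)
  assert (dot : u1 s0 * v1 + u2 s0 * v2 = 0) by lra.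
  pose proof (sum_sqr_pos _ _ Hv).
  assert (E : (u1 s0 * v1 + u2 s0 * v2) ^ 2 + (u1 s0 * v2 - u2 s0 * v1) ^ 2
              = (u1 s0 ^ 2 + u2 s0 ^ 2) * (v1 ^ 2 + v2 ^ 2)) by ring.
  rewrite dot, cross, norm in E; lra.
Qed.

Lemma continuous_gt_near (f : R -> R) (x v : R) : continuous f x -> v < f x ->
  exists d, 0 < d /\ forall t, Rabs (t - x) < d -> v < f t.
Proof.
  intros Hc Hv; destruct (Hc _ (open_gt v (f x) Hv)) as [d Hd].
  exists d; split; [apply cond_pos | intros t Ht; apply Hd, Ht].
Qed.

Lemma continuous_lt_near (f : R -> R) (x v : R) : continuous f x -> f x < v ->
  exists d, 0 < d /\ forall t, Rabs (t - x) < d -> f t < v.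
Proof.
  intros Hc Hv; destruct (Hc _ (open_lt v (f x) Hv)) as [d Hd].
  exists d; split; [apply cond_pos | intros t Ht; apply Hd, Ht].
Qed.

Lemma last_crossing (f : R -> R) (l r v : R) :
  (forall t, continuous f t) -> l < r -> f l <= v -> v < f r ->
  exists x, l <= x < r /\ f x = v /\ forall t, x < t <= r -> v < f t.
Proof.
  intros Hc Hlr Hl Hr.
  set (E t := l <= t <= r /\ f t <= v).
  destruct (completeness E) as [x [Hub Hlub]].
  { exists r; intros t [Ht _]; lra. }
  { exists l; split; [lra | exact Hl]. }
  assert (lx : l <= x) by (apply Hub; split; [lra | exact Hl]).
  assert (xr : x <= r) by (apply Hlub; intros t [Ht _]; lra).
  assert (above : forall t, x < t <= r -> v < f t).
  { intros t Ht; apply Rnot_le_lt; intro Hft.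
    assert (t <= x) by (apply Hub; split; [lra | exact Hft]); lra. }
  assert (below : f x <= v).
  { apply Rnot_lt_le; intro Hfx.
    destruct (continuous_gt_near f x v (Hc x) Hfx) as (d & Hd & Hnear).
    enough (x <= x - d / 2) by lra.
    apply Hlub; intros t [Ht Hft]; apply Rnot_lt_le; intro Htd.
    assert (t <= x) by (apply Hub; split; [exact Ht | exact Hft]).
    assert (v < f t) by (apply Hnear, Rabs_def1; lra); lra. }
  assert (xr' : x < r) by (destruct (Req_dec x r) as [->|]; lra).
  exists x; repeat split; [lra | lra | | exact above].
  apply Rle_antisym; [exact below |]; apply Rnot_lt_le; intro Hfx.
  destruct (continuous_lt_near f x v (Hc x) Hfx) as (d & Hd & Hnear).
  set (t := Rmin (x + d / 2) r).
  assert (Ht : x < t <= r) by (unfold t; apply Rmin_case_strong; lra).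
  assert (f t < v) by (apply Hnear, Rabs_def1; unfold t in *; apply Rmin_case_strong; intros; lra).
  pose proof (above t Ht); lra.
Qed.

Lemma is_derive_ge0_of_right_gt (f : R -> R) (x r d : R) :
  is_derive f x d -> x < r -> (forall t, x < t <= r -> f x < f t) -> 0 <= d.
Proof.
  intros Hd Hr Hgt; apply Rnot_lt_le; intro Hneg.
  apply is_derive_Reals in Hd.
  destruct (Hd (- d)) as [del Hdel]; [lra |].
  set (k := Rmin (del / 2) (r - x)).
  assert (Hk : 0 < k <= r - x /\ k < del)
    by (unfold k; pose proof (cond_pos del); apply Rmin_case_strong; intros; lra).
  assert (Hq : Rabs ((f (x + k) - f x) / k - d) < - d)
    by (apply Hdel; [lra | rewrite Rabs_pos_eq; lra]).
  assert (0 < (f (x + k) - f x) / k)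
    by (apply Rdiv_lt_0_compat; [enough (f x < f (x + k)) by lra; apply Hgt |]; lra).
  apply Rabs_def2 in Hq; lra.
Qed.

Lemma upcrossing (f df : R -> R) (l r v : R) :
  (forall t, is_derive f t (df t)) -> l < r -> f l <= v -> v < f r ->
  exists x, l <= x < r /\ f x = v /\ 0 <= df x.
Proof.
  intros Hd Hlr Hl Hr.
  assert (Hc : forall t, continuous f t)
    by (intro t; apply (ex_derive_continuous (V := R_NormedModule)); exists (df t); apply Hd).
  destruct (last_crossing f l r v Hc Hlr Hl Hr) as (x & Hx & Hfx & Habove).
  exists x; repeat split; try lra.
  apply (is_derive_ge0_of_right_gt f x r); [apply Hd | lra |].
  intros t Ht; rewrite Hfx; apply Habove, Ht.
Qed.

Lemma downcrossing (f df : R -> R) (l r v : R) :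
  (forall t, is_derive f t (df t)) -> l < r -> v < f l -> f r <= v ->
  exists x, l < x <= r /\ f x = v /\ df x <= 0.
Proof.
  intros Hd Hlr Hl Hr.
  assert (Hd' : forall t, is_derive (fun t => f (- t)) t (- df (- t))).
  { intro t; replace (- df (- t)) with (-1 * df (- t)) by ring.
    apply (is_derive_comp f Ropp); [apply Hd |].
    auto_derive; [exact I | ring]. }
  destruct (upcrossing (fun t => f (- t)) (fun t => - df (- t)) (- r) (- l) v) as (x & Hx & Hfx & Hdx);
    rewrite ?Ropp_involutive; auto; try lra.
  exists (- x); repeat split; [lra | lra | exact Hfx | lra].
Qed.

Definition clamp (v1 v2 y : R) : R := Rmin (Rmax y v1) v2.

Lemma clamp_lipschitz (v1 v2 y z : R) : v1 <= v2 ->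
  Rabs (clamp v1 v2 y - clamp v1 v2 z) <= Rabs (y - z).
Proof.
  intro H; unfold clamp, Rmin, Rmax.
  repeat destruct Rle_dec; unfold Rabs; repeat destruct Rcase_abs; lra.
Qed.

Lemma is_derive_clamp_comp (f : R -> R) (t d v1 v2 : R) : v1 < v2 ->
  is_derive f t d -> (v1 <= f t <= v2 -> d = 0) ->
  is_derive (fun x => clamp v1 v2 (f x)) t 0.
Proof.
  intros Hv Hd Hcrit.
  assert (Hc : continuous f t) by (apply (ex_derive_continuous (V := R_NormedModule)); exists d; exact Hd).
  destruct (Rlt_or_le (f t) v1) as [Hlo | Hlo]; [| destruct (Rlt_or_le v2 (f t)) as [Hhi | Hhi]].
  - apply (is_derive_ext_loc (fun _ => v1)); [| apply (is_derive_const v1 t)].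
    apply (filter_imp (fun x => f x < v1)); [| exact (Hc _ (open_lt v1 (f t) Hlo))].
    intros x Hx; unfold clamp; rewrite Rmax_right, Rmin_left; lra.
  - apply (is_derive_ext_loc (fun _ => v2)); [| apply (is_derive_const v2 t)].
    apply (filter_imp (fun x => v2 < f x)); [| exact (Hc _ (open_gt v2 (f t) Hhi))].
    intros x Hx; unfold clamp; rewrite Rmax_left, Rmin_right; lra.
  - rewrite (Hcrit (conj Hlo Hhi)) in Hd; apply is_derive_Reals in Hd; apply is_derive_Reals.
    intros eps Heps; destruct (Hd eps Heps) as [del Hdel]; exists del; intros k Hk Hkd.
    specialize (Hdel k Hk Hkd); rewrite Rminus_0_r in *; unfold Rdiv in *; rewrite Rabs_mult in *.
    eapply Rle_lt_trans; [| exact Hdel].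
    apply Rmult_le_compat_r; [apply Rabs_pos | apply clamp_lipschitz; lra].
Qed.

Lemma critical_band_not_crossed (f df : R -> R) (j1 j2 a b : R) :
  (forall t, is_derive f t (df t)) -> (forall t, j1 < f t < j2 -> df t = 0) ->
  a < b -> f a <= j1 -> j2 <= f b -> j2 <= j1.
Proof.
  intros Hd Hcrit Hab Ha Hb; apply Rnot_lt_le; intro Hj.
  set (v1 := j1 + (j2 - j1) / 3); set (v2 := j2 - (j2 - j1) / 3).
  destruct (MVT_cor2 (fun x => clamp v1 v2 (f x)) (fun _ => 0) a b Hab) as [c [Hc _]].
  { intros c _; apply is_derive_Reals, (is_derive_clamp_comp f c (df c)); [unfold v1, v2; lra | apply Hd |].
    intros; apply Hcrit; unfold v1, v2 in *; lra. }
  unfold clamp in Hc.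
  rewrite (Rmax_right (f a)), (Rmin_left v1), (Rmax_left (f b)), (Rmin_right (f b)) in Hc;
    unfold v1, v2 in *; lra.
Qed.

(* If every opposition [A x - B y = PI] had [A'(x) = B'(y)], each value [v] of [A] between
   [B y1 + PI] and [B x1 + PI] would be critical: [v - PI = B y] for some [y], and by periodicity
   [A] takes the value [v] at an upcrossing and at a downcrossing, where its rates of opposite
   signs both equal [B'(y)]. *)
Lemma opposition_with_distinct_rates (A B dA dB : R -> R) (L x1 y1 : R) :
  (forall t, is_derive A t (dA t)) -> (forall t, is_derive B t (dB t)) ->
  (forall t, A (t + L) = A t) -> (forall t, A t - B t < PI) ->
  y1 < x1 < y1 + L -> PI < A x1 - B y1 ->
  exists x y, A x - B y = PI /\ dA x <> dB y.
Proof.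
  intros DA DB PA Hlt Hxy Hgt.
  apply NNPP; intro Hno.
  assert (Hsame : forall x y, A x - B y = PI -> dA x = dB y).
  { intros x y E; apply NNPP; intro Hne; apply Hno; exists x, y; auto. }
  set (j1 := B y1 + PI); set (j2 := Rmin (A x1) (B x1 + PI)).
  assert (Hj2 : j2 <= A x1 /\ j2 <= B x1 + PI) by (split; [apply Rmin_l | apply Rmin_r]).
  assert (Hcrit : forall t, j1 < A t < j2 -> dA t = 0).
  { intros t Ht.
    assert (CB : continuity B).
    { intro s; apply continuity_pt_filterlim, (ex_derive_continuous (V := R_NormedModule)).
      exists (dB s); apply DB. }
    destruct (IVT_gen B y1 x1 (A t - PI) CB) as [y [_ Hy]].
    { split; [apply Rle_trans with (B y1); [apply Rmin_l | unfold j1 in Ht; lra]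
             | apply Rle_trans with (B x1); [lra | apply Rmax_r]]. }
    destruct (upcrossing A dA y1 x1 (A t)) as (x' & _ & Hx' & Hup); auto; try lra.
    { specialize (Hlt y1); unfold j1 in Ht; lra. }
    destruct (downcrossing A dA x1 (y1 + L) (A t)) as (x'' & _ & Hx'' & Hdown); auto; try lra.
    { rewrite PA; specialize (Hlt y1); unfold j1 in Ht; lra. }
    rewrite (Hsame x' y) in Hup by lra; rewrite (Hsame x'' y) in Hdown by lra.
    rewrite (Hsame t y) by lra; lra. }
  assert (Hband : j2 <= j1) by (apply (critical_band_not_crossed A dA j1 j2 y1 x1); auto; try lra;
                                specialize (Hlt y1); unfold j1; lra).
  revert Hband; unfold j2, j1; apply Rmin_case_strong; intros; specialize (Hlt x1); lra.
Qed.

Lemma opposition_with_distinct_rates_periodic (A B dA dB : R -> R) (L x1 y1 : R) :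
  (forall t, is_derive A t (dA t)) -> (forall t, is_derive B t (dB t)) ->
  (forall t, A (t + L) = A t) -> (forall t, B (t + L) = B t) -> (forall t, A t - B t < PI) ->
  Rabs (x1 - y1) <= L -> PI < A x1 - B y1 ->
  exists x y, A x - B y = PI /\ dA x <> dB y.
Proof.
  intros DA DB PA PB Hlt Hxy Hgt.
  destruct (Rtotal_order y1 x1) as [Hyx | [-> | Hxy']].
  - apply (opposition_with_distinct_rates A B dA dB L x1 y1); auto.
    rewrite Rabs_pos_eq in Hxy by lra; split; [lra |].
    destruct (Req_dec x1 (y1 + L)) as [-> |]; [rewrite PA in Hgt; specialize (Hlt y1) | ]; lra.
  - specialize (Hlt x1); lra.
  - rewrite Rabs_left in Hxy by lra.
    rewrite <- (Rplus_0_r y1), <- (Rplus_opp_l L), <- Rplus_assoc, PB in Hgt.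
    apply (opposition_with_distinct_rates A B dA dB L x1 (y1 + - L)); auto; split; [| lra].
    destruct (Req_dec x1 (y1 + - L)) as [E |]; [| lra].
    exfalso; subst x1; specialize (Hlt (y1 + - L)); lra.
Qed.

(* Near [t] the lift is [f t + atan (tan (f y - f t))], and [tan (f y - f t)] is a
   quotient of expressions differentiable at [t]. *)
Lemma is_derive_angle_lift (f cf sf : R -> R) (t dc ds : R) :
  continuous f t -> (forall x, cos (f x) = cf x) -> (forall x, sin (f x) = sf x) ->
  is_derive cf t dc -> is_derive sf t ds ->
  is_derive f t (cf t * ds - sf t * dc).
Proof.
  intros Hc Ec Es Dc Ds.
  set (N x := cf t * sf x - sf t * cf x); set (D x := cf t * cf x + sf t * sf x).
  assert (Dt : D t = 1) by (unfold D; rewrite <- Ec, <- Es; pose proof (sin2_cos2 (f t)); unfold Rsqr in *; lra).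
  assert (DN : is_derive N t (cf t * ds - sf t * dc))
    by (apply (is_derive_minus (fun x => cf t * sf x)); apply is_derive_scal; assumption).
  assert (DD : is_derive D t (cf t * dc + sf t * ds))
    by (apply (is_derive_plus (fun x => cf t * cf x)); apply is_derive_scal; assumption).
  apply (is_derive_ext_loc (fun x => f t + atan (N x / D x))).
  - destruct (continuous_lt_near (fun y => Rabs (f y - f t)) t (PI / 2)) as (d & Hd & Hnear).
    + apply (continuous_comp (fun y => f y - f t) Rabs), continuous_Rabs.
      apply (continuous_minus f (fun _ => f t)); [exact Hc | apply continuous_const].
    + rewrite Rminus_diag, Rabs_R0; pose proof PI_RGT_0; lra.
    + exists (mkposreal d Hd); intros y Hy; specialize (Hnear y Hy); apply Rabs_def2 in Hnear.
      assert (EN : N y = sin (f y - f t)) by (unfold N; rewrite sin_minus, !Ec, !Es; ring).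
      assert (ED : D y = cos (f y - f t)) by (unfold D; rewrite cos_minus, !Ec, !Es; ring).
      rewrite EN, ED; fold (tan (f y - f t)); rewrite atan_tan by lra; simpl; ring.
  - evar (l : R); replace (cf t * ds - sf t * dc) with l; [apply (is_derive_plus (fun _ => f t)) |].
    + apply is_derive_const.
    + apply (is_derive_comp atan (fun x => N x / D x)).
      * apply is_derive_Reals, derivable_pt_lim_atan.
      * apply (is_derive_div N D t _ _ DN DD); rewrite Dt; lra.
    + unfold l, plus, zero, scal; simpl; unfold mult; simpl.
      rewrite Dt; unfold N; field; nra.
Qed.

Lemma continuous_cos_eq1_const (d : R -> R) :
  (forall x, continuous d x) -> (forall x, cos (d x) = 1) -> d 0 = 0 -> forall x, d x = 0.
Proof.
  assert (Hpos : forall g : R -> R, (forall x, continuous g x) -> (forall x, cos (g x) = 1) ->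
                   g 0 = 0 -> forall x, ~ 0 < g x).
  { intros g Hc Hcos H0 x Hx.
    assert (Cg : continuity g) by (intro y; apply continuity_pt_filterlim, Hc).
    pose proof PI_RGT_0.
    set (v := Rmin (g x) PI).
    destruct (IVT_gen g 0 x v Cg) as [z [_ Hz]].
    { rewrite H0, Rmin_left, Rmax_right by lra; unfold v; apply Rmin_case_strong; lra. }
    assert (Hv : 0 < v <= PI) by (unfold v; apply Rmin_case_strong; lra).
    pose proof (cos_decreasing_1 0 v ltac:(lra) ltac:(lra) ltac:(lra) ltac:(lra) ltac:(lra)).
    rewrite cos_0, <- Hz, Hcos in H1; lra. }
  intros Hc Hcos H0 x.
  destruct (Rtotal_order (d x) 0) as [Hneg | [Hz | Hp]]; [exfalso | exact Hz | exfalso].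
  - apply (Hpos (fun y => - d y)) with x; [| intro y; rewrite cos_neg; apply Hcos | rewrite H0; ring | lra].
    intro y; apply (continuous_opp d), Hc.
  - exact (Hpos d Hc Hcos H0 x Hp).
Qed.

Lemma continuous_lift_periodic (th : R -> R) (L : R) :
  (forall x, continuous th x) ->
  (forall x, cos (th (x + L)) = cos (th x)) -> (forall x, sin (th (x + L)) = sin (th x)) ->
  th L = th 0 -> forall x, th (x + L) = th x.
Proof.
  intros Hc Pc Ps H0 x.
  enough (th (x + L) - th x = 0) by lra.
  apply (continuous_cos_eq1_const (fun x => th (x + L) - th x)).
  - intro y; apply (continuous_minus (fun y => th (y + L))); [| apply Hc].
    apply (continuous_comp (fun y => y + L) th); [| apply Hc].
    apply (continuous_plus (fun y : R => y) (fun _ => L)); [apply continuous_id | apply continuous_const].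
  - intro y; rewrite cos_minus, Pc, Ps; pose proof (sin2_cos2 (th y)); unfold Rsqr in *; lra.
  - rewrite Rplus_0_l, H0; ring.
Qed.

Lemma is_derive_nonneg_loop (f df : R -> R) (a b x : R) :
  (forall s, is_derive f s (df s)) -> (forall s, a <= s <= b -> 0 <= df s) ->
  f a = f b -> a < x < b -> df x = 0.
Proof.
  intros Hd Hpos Hab Hx.
  assert (Hmvt : forall l r, a <= l < r -> r <= b -> f l <= f r).
  { intros l r Hl Hr.
    destruct (MVT_cor2 f df l r) as (c & Hc & Hcl); [lra | intros; apply is_derive_Reals, Hd |].
    pose proof (Hpos c ltac:(lra)); nra. }
  assert (Hconst : forall t, a < t < b -> f t = f a).
  { intros t Ht; pose proof (Hmvt a t ltac:(lra) ltac:(lra)); pose proof (Hmvt t b ltac:(lra) ltac:(lra)); lra. }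
  assert (H0 : is_derive f x 0).
  { apply (is_derive_ext_loc (fun _ => f a)); [| apply (is_derive_const (f a) x)].
    assert (Hd0 : 0 < Rmin (x - a) (b - x)) by (apply Rmin_case_strong; lra).
    exists (mkposreal _ Hd0); intros y Hy; change (Rabs (y - x) < Rmin (x - a) (b - x)) in Hy.
    apply Rabs_def2 in Hy; pose proof (Rmin_l (x - a) (b - x)); pose proof (Rmin_r (x - a) (b - x)).
    symmetry; apply Hconst; lra. }
  rewrite <- (is_derive_unique _ _ _ (Hd x)); exact (is_derive_unique _ _ _ H0).
Qed.

(* If the tangent angle oscillated by at most [PI] on a period, the component of the curve
   along the mean direction would be nondecreasing, hence constant, while the transverse
   component has a critical point where the tangent points along the mean direction. *)
Lemma closed_curve_angle_oscillation (c1 c2 n th : R -> R) (L : R) : 0 < L ->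
  (forall s, is_derive c1 s (n s * cos (th s))) -> (forall s, is_derive c2 s (n s * sin (th s))) ->
  (forall s, 0 < n s) -> (forall s, continuous th s) -> c1 L = c1 0 -> c2 L = c2 0 ->
  exists xM xm, 0 <= xM <= L /\ 0 <= xm <= L /\ PI < th xM - th xm.
Proof.
  intros HL D1 D2 Hn Hth P1 P2.
  assert (Cth : forall c, continuity_pt th c) by (intro c; apply continuity_pt_filterlim, Hth).
  destruct (continuity_ab_maj th 0 L) as [xM [HM HxM]]; [lra | intros; apply Cth |].
  destruct (continuity_ab_min th 0 L) as [xm [Hm Hxm]]; [lra | intros; apply Cth |].
  exists xM, xm; split; [exact HxM | split; [exact Hxm |]].
  apply Rnot_le_lt; intro Hosc.
  set (psi := (th xM + th xm) / 2).
  assert (Hclose : forall s, 0 <= s <= L -> - (PI / 2) <= th s - psi <= PI / 2)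
    by (intros s Hs; specialize (HM s Hs); specialize (Hm s Hs); unfold psi; lra).
  set (F s := cos psi * c1 s + sin psi * c2 s).
  set (G s := - sin psi * c1 s + cos psi * c2 s).
  assert (DF : forall s, is_derive F s (n s * cos (th s - psi))).
  { intro s; rewrite cos_minus.
    replace (n s * (cos (th s) * cos psi + sin (th s) * sin psi))
      with (cos psi * (n s * cos (th s)) + sin psi * (n s * sin (th s))) by ring.
    apply (is_derive_plus (fun s => cos psi * c1 s)); apply is_derive_scal; auto. }
  assert (DG : forall s, is_derive G s (n s * sin (th s - psi))).
  { intro s; rewrite sin_minus.
    replace (n s * (sin (th s) * cos psi - cos (th s) * sin psi))
      with (- sin psi * (n s * cos (th s)) + cos psi * (n s * sin (th s))) by ring.
    apply (is_derive_plus (fun s => - sin psi * c1 s)); apply is_derive_scal; auto. }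
  destruct (MVT_cor2 G (fun s => n s * sin (th s - psi)) 0 L) as (x & Hx & HxL);
    [lra | intros; apply is_derive_Reals, DG |].
  assert (Hsin : sin (th x - psi) = 0).
  { assert (G L = G 0) by (unfold G; rewrite P1, P2; ring).
    pose proof (Hn x); assert (n x * sin (th x - psi) = 0) by nra.
    destruct (Rmult_integral _ _ H1); [lra | assumption]. }
  assert (Hcos : cos (th x - psi) = 1).
  { pose proof (cos_ge_0 _ (proj1 (Hclose x ltac:(lra))) (proj2 (Hclose x ltac:(lra)))).
    pose proof (sin2_cos2 (th x - psi)); unfold Rsqr in *; rewrite Hsin in *; nra. }
  assert (Hzero : n x * cos (th x - psi) = 0).
  { apply (is_derive_nonneg_loop F (fun s => n s * cos (th s - psi)) 0 L x DF); [| unfold F; rewrite P1, P2; ring | lra].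
    intros s Hs; apply Rmult_le_pos; [apply Rlt_le, Hn | apply cos_ge_0; apply Hclose, Hs]. }
  rewrite Hcos in Hzero; pose proof (Hn x); lra.
Qed.

Lemma is_derive_gamma_comp (a b da : R -> R) (T s : R) :
  (forall x, is_derive a x (da x)) -> (forall x, continuous b x) ->
  is_derive (gamma_comp a b T) s (/ 2 * (da (s + T) + da (s - T)) + / 2 * (b (s + T) - b (s - T))).
Proof.
  intros Da Cb; unfold gamma_comp.
  apply (is_derive_plus (fun x => / 2 * (a (x + T) + a (x - T)))); apply is_derive_scal.
  - apply (is_derive_plus (fun x => a (x + T)) (fun x => a (x - T))).
    + replace (da (s + T)) with (scal 1 (da (s + T))) by apply Rmult_1_l.
      apply (is_derive_comp a (fun x => x + T)); [apply Da | auto_derive; [exact I | ring]].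
    + replace (da (s - T)) with (scal 1 (da (s - T))) by apply Rmult_1_l.
      apply (is_derive_comp a (fun x => x - T)); [apply Da | auto_derive; [exact I | ring]].
  - replace (b (s + T) - b (s - T)) with (minus (scal 1 (b (s + T))) (scal 1 (b (s - T))))
      by (unfold minus, plus, opp, scal; simpl; unfold mult; simpl; ring).
    apply (is_derive_RInt_bound_comp b (fun u v => RInt b u v) (fun x => x - T) (fun x => x + T)).
    + apply filter_forall; intros [u v]; apply (RInt_correct (V := R_CompleteNormedModule)).
      apply (ex_RInt_continuous (V := R_CompleteNormedModule)); intros; apply Cb.
    + apply Cb.
    + apply Cb.
    + auto_derive; [exact I | ring].
    + auto_derive; [exact I | ring].
Qed.

(* At [s0 = (x + y) / 2] the two unit vectors [e^{i A(s0 + T)}] and [e^{i B(s0 - T)}] cancel,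
   and the derivative of half their sum is [(A'(x) - B'(y)) i e^{i A(x)} / 2]. *)
Lemma no_continuous_direction_at_opposition (A B : R -> R) (x y : R) :
  ex_derive A x -> ex_derive B y -> cos (A x) = - cos (B y) -> sin (A x) = - sin (B y) ->
  Derive A x <> Derive B y ->
  ~ continuous_direction
      (fun s => / 2 * (cos (A (s + (x - y) / 2)) + cos (B (s - (x - y) / 2))))
      (fun s => / 2 * (sin (A (s + (x - y) / 2)) + sin (B (s - (x - y) / 2)))).
Proof.
  intros DA DB Ec Es Hne.
  set (s0 := (x + y) / 2); set (T := (x - y) / 2).
  assert (Ex : s0 + T = x) by (unfold s0, T; field).
  assert (Ey : s0 - T = y) by (unfold s0, T; field).
  assert (Ey' : s0 + - T = y) by exact Ey.
  apply (no_continuous_direction_at_simple_zero _ _ s0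
           (- / 2 * sin (A x) * (Derive A x - Derive B y)) (/ 2 * cos (A x) * (Derive A x - Derive B y))).
  - auto_derive; rewrite ?Ex, ?Ey'; [tauto |].
    change (Derive (fun z => A z) x) with (Derive A x); change (Derive (fun z => B z) y) with (Derive B y).
    rewrite Es; ring.
  - auto_derive; rewrite ?Ex, ?Ey'; [tauto |].
    change (Derive (fun z => A z) x) with (Derive A x); change (Derive (fun z => B z) y) with (Derive B y).
    rewrite Ec; ring.
  - rewrite Ex, Ey, Ec; ring.
  - rewrite Ex, Ey, Es; ring.
  - assert (Hd : Derive A x - Derive B y <> 0) by lra.
    destruct (Req_dec (sin (A x)) 0) as [Hs | Hs]; [right | left].
    + assert (cos (A x) <> 0) by (intro Hc; pose proof (sin2_cos2 (A x)); unfold Rsqr in *;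
                                  rewrite Hs, Hc in *; lra).
      repeat apply Rmult_integral_contrapositive_currified; auto; lra.
    + repeat apply Rmult_integral_contrapositive_currified; auto; lra.
Qed.

(* Writing [D = n e^{i th}] and [b = k i e^{i th}] with [n^2 + k^2 = 1], the unit vectors
   [D + b] and [D - b] are [e^{i (th + phi)}] and [e^{i (th - phi)}] for [phi = atan (k / n)]. *)
Definition null_phase (D1 D2 b1 b2 : R) : R := atan ((D1 * b2 - D2 * b1) / (D1 ^ 2 + D2 ^ 2)).

Lemma cos_sin_null_phase (D1 D2 b1 b2 th : R) :
  0 < D1 ^ 2 + D2 ^ 2 ->
  D1 = sqrt (D1 ^ 2 + D2 ^ 2) * cos th -> D2 = sqrt (D1 ^ 2 + D2 ^ 2) * sin th ->
  b1 * D1 + b2 * D2 = 0 -> D1 ^ 2 + D2 ^ 2 + b1 ^ 2 + b2 ^ 2 = 1 ->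
  let phi := null_phase D1 D2 b1 b2 in
  cos (th + phi) = D1 + b1 /\ sin (th + phi) = D2 + b2 /\
  cos (th - phi) = D1 - b1 /\ sin (th - phi) = D2 - b2.
Proof.
  intros Hpos E1 E2 Horth Hnorm phi.
  pose proof (sqrt_lt_R0 _ Hpos) as Hn; pose proof (sqrt_sqrt _ (Rlt_le _ _ Hpos)) as Hn2.
  set (n := sqrt (D1 ^ 2 + D2 ^ 2)) in *.
  pose proof (sin2_cos2 th) as Hcs; unfold Rsqr in Hcs.
  set (c := cos th) in *; set (s := sin th) in *.
  set (k := c * b2 - s * b1).
  assert (Hbc : b1 * c + b2 * s = 0).
  { assert (n * (b1 * c + b2 * s) = 0) by (rewrite <- Horth, E1, E2; ring).
    destruct (Rmult_integral _ _ H); [lra | assumption]. }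
  assert (B1 : b1 = - s * k)
    by (transitivity (b1 * (s * s + c * c) - c * (b1 * c + b2 * s)); [rewrite Hcs, Hbc | unfold k]; ring).
  assert (B2 : b2 = c * k)
    by (transitivity (b2 * (s * s + c * c) - s * (b1 * c + b2 * s)); [rewrite Hcs, Hbc | unfold k]; ring).
  assert (Hnk : n * n + k * k = 1).
  { rewrite Hn2, <- Hnorm, B1, B2; replace (D1 ^ 2 + D2 ^ 2) with (n * n) by (rewrite Hn2; ring).
    ring_simplify; replace (s ^ 2) with (1 - c ^ 2) by lra; ring. }
  assert (Hq : (D1 * b2 - D2 * b1) / (D1 ^ 2 + D2 ^ 2) = k / n).
  { replace (D1 ^ 2 + D2 ^ 2) with (n * n) by (rewrite Hn2; ring).
    rewrite E1, E2, B1, B2; field_simplify_eq; [| lra]; replace (s ^ 2) with (1 - c ^ 2) by lra; ring. }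
  assert (Hsq : sqrt (1 + (k / n)²) = / n).
  { replace (1 + (k / n)²) with (Rsqr (/ n)) by (unfold Rsqr; field_simplify_eq; lra).
    apply sqrt_Rsqr, Rlt_le, Rinv_0_lt_compat, Hn. }
  assert (Cphi : cos phi = n) by (unfold phi, null_phase; rewrite Hq, cos_atan, Hsq; field; lra).
  assert (Sphi : sin phi = k) by (unfold phi, null_phase; rewrite Hq, sin_atan, Hsq; field; lra).
  rewrite cos_plus, sin_plus, cos_minus, sin_minus, Cphi, Sphi, E1, E2, B1, B2.
  repeat split; unfold c, s; ring.
Qed.

Lemma is_derive_smooth (f : R -> R) (x : R) : smooth f -> is_derive f x (Derive f x).
Proof. intro H; apply Derive_correct, (H 1%nat x). Qed.

Lemma continuous_smooth (f : R -> R) (x : R) : smooth f -> continuous f x.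
Proof. intro H; apply (ex_derive_continuous (V := R_NormedModule)), (H 1%nat x). Qed.

Lemma periodic_Derive (f : R -> R) (L : R) :
  (forall x, ex_derive f x) -> periodic L f -> periodic L (Derive f).
Proof.
  intros Hd Hp s; symmetry; apply is_derive_unique.
  apply (is_derive_ext (fun x => f (x + L))); [intro; apply Hp |].
  replace (Derive f (s + L)) with (scal 1 (Derive f (s + L))) by apply Rmult_1_l.
  apply (is_derive_comp f (fun x => x + L)); [apply Derive_correct, Hd | auto_derive; [exact I | ring]].
Qed.

Section NullAngles.

Variables (L : R) (a1 a2 b1 b2 th : R -> R).
Hypotheses (L_pos : 0 < L)
  (smooth_a1 : smooth a1) (smooth_a2 : smooth a2) (smooth_b1 : smooth b1) (smooth_b2 : smooth b2)
  (periodic_a1 : periodic L a1) (periodic_a2 : periodic L a2)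
  (periodic_b1 : periodic L b1) (periodic_b2 : periodic L b2)
  (regular : forall s, Derive a1 s <> 0 \/ Derive a2 s <> 0)
  (orthogonal : forall s, b1 s * Derive a1 s + b2 s * Derive a2 s = 0)
  (unit_norm : forall s, Derive a1 s ^ 2 + Derive a2 s ^ 2 + b1 s ^ 2 + b2 s ^ 2 = 1)
  (lift : angle_lift a1 a2 th) (lift_closed : th L = th 0).

Let speed (s : R) : R := sqrt (Derive a1 s ^ 2 + Derive a2 s ^ 2).

Lemma speed_pos (s : R) : 0 < speed s.
Proof. apply sqrt_lt_R0, sum_sqr_pos, regular. Qed.

Lemma periodic_tangent : periodic L (Derive a1) /\ periodic L (Derive a2).
Proof. split; apply periodic_Derive; auto; intro x; [apply (smooth_a1 1%nat x) | apply (smooth_a2 1%nat x)]. Qed.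

Lemma lift_periodic (s : R) : th (s + L) = th s.
Proof.
  destruct lift as [Hc Hlift]; destruct periodic_tangent as [P1 P2].
  assert (Pspeed : forall x, speed (x + L) = speed x) by (intro x; unfold speed; rewrite P1, P2; reflexivity).
  assert (Hcos : forall x, cos (th x) = Derive a1 x / speed x).
  { intro x; rewrite (proj1 (Hlift x)); fold (speed x); field; apply Rgt_not_eq, speed_pos. }
  assert (Hsin : forall x, sin (th x) = Derive a2 x / speed x).
  { intro x; rewrite (proj2 (Hlift x)); fold (speed x); field; apply Rgt_not_eq, speed_pos. }
  apply continuous_lift_periodic; auto; intro x; rewrite ?Hcos, ?Hsin, ?P1, ?P2, Pspeed; reflexivity.
Qed.

Lemma lift_oscillation : exists xM xm, 0 <= xM <= L /\ 0 <= xm <= L /\ PI < th xM - th xm.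
Proof.
  destruct lift as [Hc Hlift].
  apply (closed_curve_angle_oscillation a1 a2 speed th L); auto using speed_pos.
  - intro s; unfold speed; rewrite <- (proj1 (Hlift s)); apply is_derive_smooth, smooth_a1.
  - intro s; unfold speed; rewrite <- (proj2 (Hlift s)); apply is_derive_smooth, smooth_a2.
  - rewrite <- (Rplus_0_l L); apply periodic_a1.
  - rewrite <- (Rplus_0_l L); apply periodic_a2.
Qed.

Let phi (s : R) : R := null_phase (Derive a1 s) (Derive a2 s) (b1 s) (b2 s).

Definition theta_plus (s : R) : R := th s + phi s.
Definition theta_minus (s : R) : R := th s - phi s.

Lemma cos_sin_theta_pm (s : R) :
  cos (theta_plus s) = Derive a1 s + b1 s /\ sin (theta_plus s) = Derive a2 s + b2 s /\
  cos (theta_minus s) = Derive a1 s - b1 s /\ sin (theta_minus s) = Derive a2 s - b2 s.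
Proof. apply cos_sin_null_phase; auto; [apply sum_sqr_pos, regular | apply lift | apply lift]. Qed.

Lemma theta_pm_periodic (s : R) :
  theta_plus (s + L) = theta_plus s /\ theta_minus (s + L) = theta_minus s.
Proof.
  destruct periodic_tangent as [P1 P2].
  unfold theta_plus, theta_minus, phi; rewrite lift_periodic, P1, P2, periodic_b1, periodic_b2; auto.
Qed.

Lemma theta_pm_gap (s : R) : theta_plus s - theta_minus s < PI /\ theta_minus s - theta_plus s < PI.
Proof.
  pose proof (atan_bound ((Derive a1 s * b2 s - Derive a2 s * b1 s) / (Derive a1 s ^ 2 + Derive a2 s ^ 2))).
  unfold theta_plus, theta_minus, phi, null_phase; lra.
Qed.

Lemma continuous_phi (s : R) : continuous phi s.
Proof.
  apply (ex_derive_continuous (V := R_NormedModule)); unfold phi, null_phase.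
  pose proof (sum_sqr_pos _ _ (regular s)).
  assert (forall f, smooth f -> ex_derive f s) by (intros f Hf; apply (Hf 1%nat s)).
  assert (forall f, smooth f -> ex_derive (Derive f) s) by (intros f Hf; apply (Hf 2%nat s)).
  auto_derive; repeat split; auto; lra.
Qed.

Lemma theta_pm_derivable (s : R) : ex_derive theta_plus s /\ ex_derive theta_minus s.
Proof.
  destruct lift as [Hc _].
  assert (D : forall f g, smooth f -> smooth g -> is_derive (fun x => Derive f x + g x) s
                            (Derive (Derive f) s + Derive g s)).
  { intros f g Hf Hg; apply (is_derive_plus (Derive f)); [| apply is_derive_smooth, Hg].
    apply Derive_correct, (Hf 2%nat s). }
  assert (D' : forall f g, smooth f -> smooth g -> is_derive (fun x => Derive f x - g x) s
                            (Derive (Derive f) s - Derive g s)).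
  { intros f g Hf Hg; apply (is_derive_minus (Derive f)); [| apply is_derive_smooth, Hg].
    apply Derive_correct, (Hf 2%nat s). }
  split; eexists.
  - apply (is_derive_angle_lift theta_plus (fun x => Derive a1 x + b1 x) (fun x => Derive a2 x + b2 x));
      auto; try (intro x; apply cos_sin_theta_pm).
    apply (continuous_plus th phi); [apply Hc | apply continuous_phi].
  - apply (is_derive_angle_lift theta_minus (fun x => Derive a1 x - b1 x) (fun x => Derive a2 x - b2 x));
      auto; try (intro x; apply cos_sin_theta_pm).
    apply (continuous_minus th phi); [apply Hc | apply continuous_phi].
Qed.

Lemma opposition_exists : exists x y,
  cos (theta_plus x) = - cos (theta_minus y) /\ sin (theta_plus x) = - sin (theta_minus y) /\
  Derive theta_plus x <> Derive theta_minus y.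
Proof.
  destruct lift_oscillation as (xM & xm & HxM & Hxm & Hosc).
  assert (Hd : forall s, is_derive theta_plus s (Derive theta_plus s) /\
                         is_derive theta_minus s (Derive theta_minus s))
    by (intro s; split; apply Derive_correct, theta_pm_derivable).
  assert (Hgap : Rabs (xM - xm) <= L) by (apply Rabs_le; lra).
  assert (Hsum : (theta_plus xM - theta_minus xm) + (theta_minus xM - theta_plus xm)
                 = 2 * (th xM - th xm)) by (unfold theta_plus, theta_minus; ring).
  destruct (Rlt_or_le PI (theta_plus xM - theta_minus xm)) as [Hp | Hm].
  - destruct (opposition_with_distinct_rates_periodic theta_plus theta_minus (Derive theta_plus)
                (Derive theta_minus) L xM xm) as (x & y & E & Hne);
      auto; try apply Hd; try apply theta_pm_periodic; try apply theta_pm_gap.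
    exists x, y; replace (theta_plus x) with (theta_minus y + PI) by lra.
    rewrite neg_cos, neg_sin; auto.
  - destruct (opposition_with_distinct_rates_periodic theta_minus theta_plus (Derive theta_minus)
                (Derive theta_plus) L xM xm) as (x & y & E & Hne);
      auto; try apply Hd; try apply theta_pm_periodic; try apply theta_pm_gap; try lra.
    exists y, x; replace (theta_minus x) with (theta_plus y + PI) by lra.
    rewrite neg_cos, neg_sin, !Ropp_involutive; auto.
Qed.

Lemma Derive_gamma_comp_theta_pm (T s : R) :
  Derive (gamma_comp a1 b1 T) s = / 2 * (cos (theta_plus (s + T)) + cos (theta_minus (s - T))) /\
  Derive (gamma_comp a2 b2 T) s = / 2 * (sin (theta_plus (s + T)) + sin (theta_minus (s - T))).
Proof.
  destruct (cos_sin_theta_pm (s + T)) as (C1 & S1 & _ & _).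
  destruct (cos_sin_theta_pm (s - T)) as (_ & _ & C2 & S2).
  assert (D : forall a b, smooth a -> smooth b ->
            is_derive (gamma_comp a b T) s
              (/ 2 * (Derive a (s + T) + b (s + T) + (Derive a (s - T) - b (s - T))))).
  { intros a b Ha Hb.
    replace (/ 2 * (Derive a (s + T) + b (s + T) + (Derive a (s - T) - b (s - T))))
      with (/ 2 * (Derive a (s + T) + Derive a (s - T)) + / 2 * (b (s + T) - b (s - T))) by ring.
    apply is_derive_gamma_comp; intro; [apply is_derive_smooth | apply continuous_smooth]; assumption. }
  rewrite C1, S1, C2, S2; split; apply is_derive_unique, D; assumption.
Qed.

End NullAngles.

Theorem proposition2p11 (L : R) (a1 a2 b1 b2 : R -> R) :
  0 < L ->
  smooth a1 -> smooth a2 -> smooth b1 -> smooth b2 ->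
  periodic L a1 -> periodic L a2 -> periodic L b1 -> periodic L b2 ->
  (forall s, Derive a1 s <> 0 \/ Derive a2 s <> 0) ->
  (forall s, b1 s * Derive a1 s + b2 s * Derive a2 s = 0) ->
  (forall s, Derive a1 s ^ 2 + Derive a2 s ^ 2 + b1 s ^ 2 + b2 s ^ 2 = 1) ->
  has_rotation_index L a1 a2 0%Z ->
  exists T : R,
    ~ (exists u1 u2 : R -> R,
         (forall s, continuous u1 s) /\ (forall s, continuous u2 s) /\
         forall s,
           let g1 := Derive (fun x => gamma_comp a1 b1 T x) s in
           let g2 := Derive (fun x => gamma_comp a2 b2 T x) s in
           (g1 <> 0 \/ g2 <> 0) ->
           u1 s = g1 / sqrt (g1 ^ 2 + g2 ^ 2) /\
           u2 s = g2 / sqrt (g1 ^ 2 + g2 ^ 2)).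
Proof.
  intros HL Sa1 Sa2 Sb1 Sb2 Pa1 Pa2 Pb1 Pb2 Hreg Horth Hnorm (th & Hlift & Hindex).
  assert (Hclosed : th L = th 0) by (simpl in Hindex; lra).
  destruct (opposition_exists L a1 a2 b1 b2 th) as (x & y & Ecos & Esin & Hne); auto.
  exists ((x - y) / 2).
  change (~ continuous_direction (Derive (gamma_comp a1 b1 ((x - y) / 2)))
                                 (Derive (gamma_comp a2 b2 ((x - y) / 2)))).
  intro Hdir; apply (no_continuous_direction_at_opposition
                       (theta_plus a1 a2 b1 b2 th) (theta_minus a1 a2 b1 b2 th) x y); auto.
  - apply (theta_pm_derivable a1 a2 b1 b2 th); auto.
  - apply (theta_pm_derivable a1 a2 b1 b2 th); auto.
  - revert Hdir; apply continuous_direction_ext; intro s;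
      apply (Derive_gamma_comp_theta_pm a1 a2 b1 b2 th); auto.
Qed.
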